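(* For every formula $A$ of $\mathrm{SN}$: $A$ is true at both worlds $1$ and $2$ of every $\mathrm{SN}$-model if and only if $\mathrm{SN}\vdash A$.
   Context: Formulas of $\mathrm{SN}$ are built from propositional atoms $p$, constants $\top,\bot$ and a propositional constant $t$, using $\neg,\wedge,\vee,\to$ and a unary connective $N$ (applicable to any formula, iterable). Proof system: $\mathrm{SN}\vdash A$ is generated by all classical tautologies; axioms (K) $N(A\wedge B)\leftrightarrow NA\vee NB$; (F) $\neg NA\leftrightarrow N\neg A$; (C) $A\to NNA$; (A) $t\to(p\to N\neg p)$ for atoms $p$; (T) $t\leftrightarrow Nt$; rules modus ponens and (N): from $A$ infer $N\neg A$. Semantics: an $\mathrm{SN}$-model is $M=(\{1,2\},v)$ where $v$ assigns to each atom $p$ a subset $v(p)\subseteq\{1,2\}$ such that $1\in v(p)$ implies $2\in v(p)$. Truth at $m\in\{1,2\}$: $m\vDash p$ iff $m\in v(p)$; $m\vDash\top$; $m\nvDash\bot$; $m\vDash t$ iff $m=1$; classical clauses for $\neg,\wedge,\vee,\to$ at each world; $1\vDash NA$ iff $2\nvDash A$, and $2\vDash NA$ iff $1\nvDash A$. *)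

From Stdlib Require Import Bool.

Inductive form : Type :=
| Atom : nat -> form
| Top : form
| Bot : form
| TT : form
| Neg : form -> form
| And : form -> form -> form
| Or : form -> form -> form
| Imp : form -> form -> form
| Nn : form -> form.

Definition Iff (A B : form) : form := And (Imp A B) (Imp B A).

(* Classical (boolean) evaluation in which the "propositionally atomic"
   formulas (atoms, t, and N-formulas) receive arbitrary truth values
   given by f.  A classical tautology of SN is a formula true under every
   such evaluation (i.e. a substitution instance of a propositional
   tautology). *)
Fixpoint ceval (f : form -> bool) (A : form) : bool :=
  match A with
  | Atom _ => f A
  | Top => true
  | Bot => false
  | TT => f A
  | Neg B => negb (ceval f B)
  | And B C => ceval f B && ceval f C
  | Or B C => ceval f B || ceval f C
  | Imp B C => implb (ceval f B) (ceval f C)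
  | Nn _ => f A
  end.

Definition tautology (A : form) : Prop := forall f : form -> bool, ceval f A = true.

Inductive SN_prov : form -> Prop :=
| ax_taut : forall A, tautology A -> SN_prov A
| ax_K : forall A B, SN_prov (Iff (Nn (And A B)) (Or (Nn A) (Nn B)))
| ax_F : forall A, SN_prov (Iff (Neg (Nn A)) (Nn (Neg A)))
| ax_C : forall A, SN_prov (Imp A (Nn (Nn A)))
| ax_A : forall p, SN_prov (Imp TT (Imp (Atom p) (Nn (Neg (Atom p)))))
| ax_T : SN_prov (Iff TT (Nn TT))
| rule_MP : forall A B, SN_prov (Imp A B) -> SN_prov A -> SN_prov B
| rule_N : forall A, SN_prov A -> SN_prov (Nn (Neg A)).

(* Worlds {1,2}: world 1 is [true], world 2 is [false]. *)
Definition world := bool.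
Definition w1 : world := true.
Definition w2 : world := false.

Record SN_model : Type := {
  val : nat -> world -> Prop;
  val_mono : forall p, val p w1 -> val p w2
}.

Fixpoint sat (M : SN_model) (m : world) (A : form) : Prop :=
  match A with
  | Atom p => val M p m
  | Top => True
  | Bot => False
  | TT => m = w1
  | Neg B => ~ sat M m B
  | And B C => sat M m B /\ sat M m C
  | Or B C => sat M m B \/ sat M m C
  | Imp B C => sat M m B -> sat M m C
  | Nn B => ~ sat M (negb m) B
  end.

(* For completeness, the
   axioms K, F, C, T and rule N let us push N inwards until it only stands in
   front of atoms, so every formula is provably equivalent to an N-atomic one,
   which SN treats as a propositional formula over the letters p, N p and t.
   A classical valuation of these letters that refutes such a formula, and
   respects the provable constraints that t excludes p /\ N p and ~ t forces
   p \/ N p, is the trace at one world of an SN-model (the world where t holds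
   iff the valuation makes t true; p at the other world is read off from N p).
   Hence a formula valid in all SN-models is a tautological consequence of
   provable formulas. *)
From Stdlib Require Import Bool Classical ClassicalEpsilon.

Ltac prove_tautology :=
  let f := fresh "f" in
  intro f; simpl;
  repeat match goal with
  | |- context [ceval f ?X] => destruct (ceval f X)
  | |- context [f ?X] => destruct (f X)
  end; reflexivity.

Lemma prov_tautological_mp A B : tautology (Imp A B) -> SN_prov A -> SN_prov B.
Proof. intros HAB HA. exact (rule_MP _ _ (ax_taut _ HAB) HA). Qed.

Lemma prov_conj A B : SN_prov A -> SN_prov B -> SN_prov (And A B).
Proof.
  intros HA HB.
  apply (rule_MP B); [apply (prov_tautological_mp A) |]; [prove_tautology | |]; assumption.
Qed.

(* Closes [SN_prov C] when [C] follows tautologically from the [SN_prov]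
   hypotheses in the context. *)
Ltac tautological_consequence :=
  repeat match goal with
  | H1 : SN_prov ?A, H2 : SN_prov ?B |- _ =>
      let H := fresh in pose proof (prov_conj A B H1 H2) as H; clear H1 H2
  end;
  match goal with
  | H : SN_prov _ |- _ => refine (prov_tautological_mp _ _ _ H)
  | |- _ => apply ax_taut
  end;
  prove_tautology.

Lemma N_neg A : SN_prov (Iff (Nn (Neg A)) (Neg (Nn A))).
Proof. pose proof (ax_F A). tautological_consequence. Qed.

Lemma N_antimono A B : SN_prov (Imp A B) -> SN_prov (Imp (Nn B) (Nn A)).
Proof.
  intro HAB.
  assert (Hnot : SN_prov (Neg (And A (Neg B)))) by tautological_consequence.
  pose proof (rule_N _ Hnot).
  pose proof (N_neg (Neg (And A (Neg B)))).
  pose proof (N_neg (And A (Neg B))).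
  pose proof (ax_K A (Neg B)).
  pose proof (N_neg B).
  clear HAB Hnot.
  tautological_consequence.
Qed.

Lemma N_congr A B : SN_prov (Iff A B) -> SN_prov (Iff (Nn A) (Nn B)).
Proof.
  intro HAB.
  assert (Hl : SN_prov (Imp A B)) by tautological_consequence.
  assert (Hr : SN_prov (Imp B A)) by tautological_consequence.
  apply N_antimono in Hl, Hr.
  clear HAB.
  tautological_consequence.
Qed.

Lemma N_or A B : SN_prov (Iff (Nn (Or A B)) (And (Nn A) (Nn B))).
Proof.
  assert (Hor : SN_prov (Iff (Or A B) (Neg (And (Neg A) (Neg B)))))
    by tautological_consequence.
  apply N_congr in Hor.
  pose proof (N_neg (And (Neg A) (Neg B))).
  pose proof (ax_K (Neg A) (Neg B)).
  pose proof (N_neg A).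
  pose proof (N_neg B).
  tautological_consequence.
Qed.

Lemma N_involutive A : SN_prov (Iff (Nn (Nn A)) A).
Proof.
  pose proof (ax_C A).
  pose proof (ax_C (Neg A)).
  pose proof (N_congr _ _ (N_neg A)).
  pose proof (N_neg (Nn A)).
  tautological_consequence.
Qed.

Lemma N_top : SN_prov (Iff (Nn Top) Bot).
Proof.
  assert (Htop : SN_prov Top) by tautological_consequence.
  pose proof (rule_N _ Htop).
  pose proof (ax_F Top).
  clear Htop.
  tautological_consequence.
Qed.

Lemma N_bot : SN_prov (Iff (Nn Bot) Top).
Proof.
  assert (Htop : SN_prov Top) by tautological_consequence.
  assert (Hbot : SN_prov (Imp Bot (Neg Top))) by tautological_consequence.
  pose proof (rule_N _ Htop).
  pose proof (N_antimono _ _ Hbot).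
  clear Htop Hbot.
  tautological_consequence.
Qed.

Fixpoint pushN (b : bool) (A : form) : form :=
  match A with
  | Atom p => if b then Nn (Atom p) else Atom p
  | Top => if b then Bot else Top
  | Bot => if b then Top else Bot
  | TT => TT
  | Neg B => Neg (pushN b B)
  | And B C => if b then Or (pushN b B) (pushN b C) else And (pushN b B) (pushN b C)
  | Or B C => if b then And (pushN b B) (pushN b C) else Or (pushN b B) (pushN b C)
  | Imp B C => if b then And (Neg (pushN b B)) (pushN b C) else Imp (pushN b B) (pushN b C)
  | Nn B => pushN (negb b) B
  end.

Lemma pushN_equiv A (b : bool) : SN_prov (Iff (if b then Nn A else A) (pushN b A)).
Proof.
  revert b; induction A; intros []; simpl;
    repeat match goal with IH : forall _ : bool, _ |- _ =>
             pose proof (IH true); pose proof (IH false); clear IH end.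
  all: try tautological_consequence.
  - apply N_top.
  - apply N_bot.
  - pose proof ax_T. tautological_consequence.
  - pose proof (N_neg A). tautological_consequence.
  - pose proof (ax_K A1 A2). tautological_consequence.
  - pose proof (N_or A1 A2). tautological_consequence.
  - assert (Himp : SN_prov (Iff (Imp A1 A2) (Or (Neg A1) A2)))
      by (apply ax_taut; prove_tautology).
    pose proof (N_congr _ _ Himp).
    pose proof (N_or (Neg A1) A2).
    pose proof (N_neg A1).
    clear Himp.
    tautological_consequence.
  - pose proof (N_involutive A). tautological_consequence.
Qed.

Definition atom_constraint (p : nat) : form :=
  And (Imp TT (Neg (And (Atom p) (Nn (Atom p)))))
      (Imp (Neg TT) (Or (Atom p) (Nn (Atom p)))).

Lemma atom_constraint_prov p : SN_prov (atom_constraint p).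
Proof.
  pose proof (ax_A p) as HA.
  pose proof (rule_N _ HA).
  pose proof (N_neg (Atom p)).
  pose proof (N_neg (Imp TT (Imp (Atom p) (Nn (Neg (Atom p)))))).
  pose proof (pushN_equiv (Imp TT (Imp (Atom p) (Nn (Neg (Atom p))))) true).
  simpl in *.
  unfold atom_constraint.
  tautological_consequence.
Qed.

Inductive N_atomic : form -> Prop :=
| N_atomic_atom p : N_atomic (Atom p)
| N_atomic_N_atom p : N_atomic (Nn (Atom p))
| N_atomic_top : N_atomic Top
| N_atomic_bot : N_atomic Bot
| N_atomic_TT : N_atomic TT
| N_atomic_neg B : N_atomic B -> N_atomic (Neg B)
| N_atomic_and B C : N_atomic B -> N_atomic C -> N_atomic (And B C)
| N_atomic_or B C : N_atomic B -> N_atomic C -> N_atomic (Or B C)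
| N_atomic_imp B C : N_atomic B -> N_atomic C -> N_atomic (Imp B C).

Lemma N_atomic_pushN A b : N_atomic (pushN b A).
Proof. revert b; induction A; intros []; simpl; auto using N_atomic. Qed.

Fixpoint agrees (f : form -> bool) (M : SN_model) (m : world) (A : form) : Prop :=
  match A with
  | Top | Bot => True
  | Neg B => agrees f M m B
  | And B C | Or B C | Imp B C => agrees f M m B /\ agrees f M m C
  | _ => (f A = true <-> sat M m A)
  end.

Lemma ceval_iff_sat f M m A : agrees f M m A -> (ceval f A = true <-> sat M m A).
Proof.
  induction A; simpl; try tauto.
  - intros _. split; [discriminate | contradiction].
  - intro H. rewrite negb_true_iff, <- not_true_iff_false, IHA by exact H. reflexivity.
  - intros [H1 H2]. rewrite andb_true_iff, IHA1, IHA2 by assumption. reflexivity.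
  - intros [H1 H2]. rewrite orb_true_iff, IHA1, IHA2 by assumption. reflexivity.
  - intros [H1 H2]. rewrite implb_true_iff, IHA1, IHA2 by assumption. reflexivity.
Qed.

Section Soundness.

Variables (M : SN_model) (m : world).

Definition truth (X : form) : bool :=
  if excluded_middle_informative (sat M m X) then true else false.

Lemma truth_spec X : truth X = true <-> sat M m X.
Proof.
  unfold truth; destruct (excluded_middle_informative (sat M m X)); split;
    congruence || tauto.
Qed.

Lemma truth_agrees A : agrees truth M m A.
Proof. induction A; simpl; auto using truth_spec. Qed.

Lemma tautology_sat A : tautology A -> sat M m A.
Proof. intro H. apply (ceval_iff_sat _ _ _ _ (truth_agrees A)), H. Qed.

End Soundness.

Lemma SN_sound A : SN_prov A -> forall M m, sat M m A.
Proof.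
  induction 1; intros M m; simpl.
  - apply tautology_sat, H.
  - split.
    + intro H. destruct (classic (sat M (negb m) A)); tauto.
    + tauto.
  - tauto.
  - rewrite negb_involutive; tauto.
  - intros -> Hp Hn. apply Hn, val_mono, Hp.
  - unfold w1; destruct m; simpl; split; intros; congruence.
  - apply IHSN_prov1, IHSN_prov2.
  - intro Hn. apply Hn, IHSN_prov.
Qed.

Fixpoint atom_constraints (B : form) : form :=
  match B with
  | Atom p | Nn (Atom p) => atom_constraint p
  | Neg C => atom_constraints C
  | And C D | Or C D | Imp C D => And (atom_constraints C) (atom_constraints D)
  | _ => Top
  end.

Lemma atom_constraints_prov B : SN_prov (atom_constraints B).
Proof.
  induction B; simpl; auto using atom_constraint_prov;
    try (destruct B; auto using atom_constraint_prov);
    tautological_consequence.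
Qed.

Section CountermodelOfValuation.

Variable f : form -> bool.

(* World [f TT] is the one described by [f]: there [p] holds iff [f] makes
   [p] true, and [N p] holds iff [p] fails at the other world.  When the
   constraint on [p] fails, [p] is made true everywhere only to keep
   monotonicity; such [p] never matter below. *)
Definition valuation_val (p : nat) (w : world) : Prop :=
  if ceval f (atom_constraint p) then
    if Bool.eqb w (f TT) then f (Atom p) = true else f (Nn (Atom p)) = false
  else True.

Lemma valuation_val_mono p : valuation_val p w1 -> valuation_val p w2.
Proof.
  unfold valuation_val, atom_constraint, w1, w2; simpl.
  destruct (f TT), (f (Atom p)), (f (Nn (Atom p))); simpl; auto; discriminate.
Qed.

Definition valuation_model : SN_model :=
  {| val := valuation_val; val_mono := valuation_val_mono |}.

Lemma N_atomic_agrees B :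
  N_atomic B -> ceval f (atom_constraints B) = true -> agrees f valuation_model (f TT) B.
Proof.
  induction 1; intro Hc;
    cbn [agrees atom_constraints ceval sat val valuation_model] in *; auto.
  - unfold valuation_val. rewrite Hc, eqb_reflx. reflexivity.
  - unfold valuation_val. rewrite Hc, eqb_negb1, <- not_true_iff_false.
    destruct (f (Nn (Atom p))); tauto.
  - unfold w1. reflexivity.
  - apply andb_true_iff in Hc; tauto.
  - apply andb_true_iff in Hc; tauto.
  - apply andb_true_iff in Hc; tauto.
Qed.

End CountermodelOfValuation.

Lemma N_atomic_complete B : N_atomic B -> (forall M m, sat M m B) -> SN_prov B.
Proof.
  intros HB Hvalid.
  refine (prov_tautological_mp _ _ _ (atom_constraints_prov B)).
  intro f; simpl.
  destruct (ceval f (atom_constraints B)) eqn:Hc; [simpl | reflexivity].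
  apply (ceval_iff_sat _ _ _ _ (N_atomic_agrees f B HB Hc)), Hvalid.
Qed.

Theorem theorem34 (A : form) :
  (forall M : SN_model, sat M w1 A /\ sat M w2 A) <-> SN_prov A.
Proof.
  split.
  - intro Hvalid.
    pose proof (pushN_equiv A false) as Hequiv; simpl in Hequiv.
    assert (Hpushed : SN_prov (pushN false A)).
    { apply N_atomic_complete; [apply N_atomic_pushN |].
      intros M m.
      apply (SN_sound _ Hequiv M m).
      destruct m; apply (Hvalid M). }
    tautological_consequence.
  - intros HA M. split; apply SN_sound, HA.
Qed.
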